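(* Let $T=(V_T,E_T)$ be a finite tree, $r\in V_T$, $Q\subseteq V_T$ non-empty, and $Q'=Q\cup A_Q$ as defined below. Every $Q'$-centroid decomposition tree of $T$ has height $O(\log|Q|)$.
   Context: Root $T$ at $r$, let $V_Q$ be the set of nodes whose subtree contains a node of $Q$, $T_Q$ the subtree induced by $V_Q$, $A_Q=\{u\in V_Q:\deg_{T_Q}(u)\ge 3\}$ and $Q'=Q\cup A_Q$. For a tree $Z$ and $W\subseteq V_Z$, a node $u\in W$ is a $W$-centroid of $Z$ if every component of $Z-u$ contains at most $|W|/2$ nodes of $W$. A $Q'$-centroid decomposition tree $\mathcal D(T)=(Q',E_D)$ is obtained recursively: starting with $Z=T$ and $W=Q'$, choose a $W$-centroid $c$ of $Z$, remove it, and recurse on every component $Z'$ of $Z-c$ that contains a node of $W$ (with $W\cap V(Z')$ in place of $W$); for every recursion other than the first, $E_D$ contains an edge between the centroid chosen in that recursion and the centroid chosen in the calling recursion. (Such centroids always exist, and at each step there may be two to choose from.) *)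

From Stdlib Require List.
From mathcomp Require Import all_boot.
Set Implicit Arguments. Unset Strict Implicit. Unset Printing Implicit Defensive.

Section Defs.
Variables (V : finType) (e : rel V).

Definition is_tree : Prop :=
  symmetric e /\ irreflexive e /\ (forall x y : V, connect e x y) /\
  (forall c : seq V, 3 <= size c -> ~~ ucycleb e c).

Definition relS (S : {set V}) : rel V := [rel a b | [&& a \in S, b \in S & e a b]].

Definition comp (S : {set V}) (x : V) : {set V} :=
  [set y in S | connect (relS S) x y].

(* Rooting T at r: v is in the subtree of u iff u lies on the (unique)
   r-v path, i.e. v = u or removing u disconnects v from r. *)
Definition in_subtree (r u v : V) : bool :=
  (v == u) || ~~ connect (relS (~: [set u])) r v.

Definition VQ (r : V) (Q : {set V}) : {set V} :=
  [set u | [exists q in Q, in_subtree r u q]].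

Definition degTQ (r : V) (Q : {set V}) (u : V) : nat :=
  #|[set v in VQ r Q | e u v]|.

Definition AQ (r : V) (Q : {set V}) : {set V} :=
  [set u in VQ r Q | 3 <= degTQ r Q u].

Definition Qprime (r : V) (Q : {set V}) : {set V} := Q :|: AQ r Q.

Definition is_centroid (Z W : {set V}) (u : V) : bool :=
  [&& u \in W, W \subset Z &
   [forall x in Z :\ u, 2 * #|comp (Z :\ u) x :&: W| <= #|W| ]].

Definition child_comps (Z W : {set V}) (c : V) : {set {set V}} :=
  [set comp (Z :\ c) x | x in (Z :\ c) :&: W].

End Defs.

Inductive dtree (V : Type) : Type := DNode of V & seq (dtree V).

Fixpoint dheight (V : Type) (t : dtree V) : nat :=
  let: DNode _ ts := t in foldr (fun t' m => maxn (dheight t').+1 m) 0 ts.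

Inductive cdt (V : finType) (e : rel V) : {set V} -> {set V} -> dtree V -> Prop :=
| cdtN (Z W : {set V}) (c : V) (ts : seq (dtree V)) :
    is_centroid e Z W c ->
    List.Forall2 (fun C t => cdt e C (W :&: C) t) (enum (child_comps e Z W c)) ts ->
    cdt e Z W (DNode c ts).

(* A W-centroid leaves at most half of W in every component it creates, so a
   W-centroid decomposition tree has height at most log2 |W|.  It remains to
   bound |Q'| polynomially in |Q|.  A branching node u <> r of T_Q has two
   children whose subtrees contain nodes q1, q2 of Q; then u separates r, q1
   and q2 pairwise, which in a tree determines u (it is their median).  Hence
   u |-> (q1, q2) is injective and |A_Q| <= |Q|^2 + 1, so that
   2^height <= |Q'| <= (|Q| + 1)^2. *)

From mathcomp Require Import all_boot zify.
Set Implicit Arguments. Unset Strict Implicit. Unset Printing Implicit Defensive.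

Section Tree.
Variables (V : finType) (e : rel V).
Hypothesis e_sym : symmetric e.
Hypothesis e_irr : irreflexive e.
Hypothesis e_connected : forall x y : V, connect e x y.
Hypothesis e_acyclic : forall c : seq V, 3 <= size c -> ~~ ucycleb e c.

Local Notation connectD u := (connect (relS e (~: [set u]))).
Local Notation separates u x y := (~~ connectD u x y).

Lemma relS_sym (S : {set V}) : symmetric (relS e S).
Proof. by move=> a b; rewrite /relS /= andbCA e_sym. Qed.

Lemma connect_relS_sym (S : {set V}) : connect_sym (relS e S).
Proof. exact/sym_connect_sym/relS_sym. Qed.

Lemma path_relS_mem (S : {set V}) x p : path (relS e S) x p -> all [in S] p.
Proof.
elim: p x => [|z p IH] x //= /andP [/and3P [_ zS _] zp].
by rewrite zS (IH z zp).
Qed.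

Lemma connectD_sep u x y z : separates u x y -> connectD u x z -> connectD y x z.
Proof.
move=> uxy /connectP [p]; elim: p x uxy => [|w p IH] x uxy /=.
  by move=> _ ->; apply: connect0.
case/andP => xw wp z_last.
have uwy : separates u w y.
  by apply: contra uxy; apply: connect_trans; apply: connect1.
apply: connect_trans (IH w uwy wp z_last); apply: connect1.
have ne_y v : separates u v y -> v != y.
  by apply: contraNneq => ->; apply: connect0.
by case/and3P: xw => _ _ exw; rewrite /relS /= !inE ne_y // ne_y.
Qed.

Lemma connectD_to_neighbour u x : x != u ->
  exists2 w, connectD u x w & e w u.
Proof.
case/connectP: (e_connected x u) => p.
elim: p x => [|y p IH] x /=; first by move=> _ ->; rewrite eqxx.
case/andP => exy yp u_last xu.
have [<-|yu] := eqVneq y u; first by exists x.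
have [w yw ewu] := IH y yp u_last yu.
exists w => //; apply: connect_trans yw; apply: connect1.
by rewrite /relS /= !inE xu yu.
Qed.

Lemma connectD_separator u x y : x != u -> y != u -> separates u x y ->
  connectD y x u.
Proof.
move=> xu yu uxy; have [w xw ewu] := connectD_to_neighbour xu.
have wy : w != y by apply: contraNneq uxy => <-.
apply: connect_trans (connectD_sep uxy xw) (connect1 _).
by rewrite /relS /= !inE wy ewu (eq_sym u) yu.
Qed.

Lemma neighbours_separated u a b : e u a -> e u b -> a != b -> separates u a b.
Proof.
move=> ua ub ab; apply/negP => /connectP [p0 p0_path b_last].
move: b_last; case/shortenP: p0_path => p p_path p_uniq _ b_last {p0}.
have au : a != u by apply: contraTneq ua => ->; rewrite e_irr.
have p_gt0 : 0 < size p by case: p {p_path p_uniq} b_last => //= b_a; rewrite b_a eqxx in ab.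
have /negP[] : ~~ ucycleb e (u :: a :: p) by apply: e_acyclic; rewrite /= !ltnS.
have /allP p_notu := path_relS_mem p_path.
rewrite /ucycleb /= ua rcons_path -b_last (e_sym b) ub andbT.
rewrite (sub_path _ p_path) => [|x y /and3P []] //.
move: p_uniq => /= ->; rewrite andbT inE negb_or (eq_sym u) au /=.
by apply/negP => /(p_notu u); rewrite !inE eqxx.
Qed.

Lemma connectD_around u u' x y : u' != u -> x != u -> y != u ->
  separates u x u' -> separates u y u' -> connectD u' x y.
Proof.
move=> u'u xu yu uxu' uyu'.
apply: connect_trans (connectD_separator xu u'u uxu') _.
by rewrite connect_relS_sym (connectD_separator yu u'u uyu').
Qed.

Lemma separator_unique u u' r q1 q2 : r != u -> q1 != u -> q2 != u ->
  separates u r q1 -> separates u r q2 -> separates u q1 q2 ->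
  separates u' r q1 -> separates u' r q2 -> separates u' q1 q2 -> u' = u.
Proof.
move=> ru q1u q2u u_r1 u_r2 u_12 u'_r1 u'_r2 u'_12.
apply/eqP; apply: contraT => u'u.
have transfer x y : connectD u x u' -> separates u x y -> separates u y u'.
  by move=> xu' uxy; rewrite connect_relS_sym -(same_connect (@connect_relS_sym _) xu').
have [ru'|r_u'] := boolP (connectD u r u').
  by rewrite (connectD_around u'u q1u q2u (transfer _ _ ru' u_r1) (transfer _ _ ru' u_r2)) in u'_12.
have [q1u'|q1_u'] := boolP (connectD u q1 u').
  by rewrite (connectD_around u'u ru q2u r_u' (transfer _ _ q1u' u_12)) in u'_r2.
by rewrite (connectD_around u'u ru q1u r_u' q1_u') in u'_r1.
Qed.

Lemma in_subtree_child r u a q : r != u -> e u a -> separates u r a ->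
  in_subtree e r a q -> [/\ q != u, separates u r q & connectD u a q].
Proof.
move=> ru ua u_ra; have au : a != u by apply: contraTneq ua => ->; rewrite e_irr.
have [-> _|qa] := eqVneq q a; first by rewrite au u_ra connect0.
rewrite /in_subtree (negbTE qa) /= => a_rq.
have a_ru : connectD a r u := connectD_separator ru au u_ra.
have qu : q != u by apply: contraNneq a_rq => ->.
have u_rq : separates u r q by apply: contra a_rq; apply: connectD_sep.
have a_qu : separates a q u.
  by apply: contra a_rq => qu'; rewrite (same_connect (@connect_relS_sym _) a_ru) connect_relS_sym.
by rewrite qu u_rq connect_relS_sym (connectD_separator qa _ a_qu) // eq_sym.
Qed.

Lemma neighbour_connectD_unique r u a b : e u a -> e u b ->
  connectD u r a -> connectD u r b -> a = b.
Proof.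
move=> ua ub ra rb; apply/eqP; apply: contraT => ab.
by have := neighbours_separated ua ub ab; rewrite -(same_connect (@connect_relS_sym _) ra) rb.
Qed.

Definition branch_witness r (Q : {set V}) u (p : V * V) : bool :=
  [&& p.1 \in Q, p.2 \in Q, p.1 != u, p.2 != u,
      separates u r p.1, separates u r p.2 & separates u p.1 p.2].

Lemma AQ_branch_witness r Q u : u \in AQ e r Q -> u != r ->
  exists p, branch_witness r Q u p.
Proof.
rewrite inE => /andP [_ deg_u] ur; have ru : r != u by rewrite eq_sym.
set N := [set v in VQ e r Q | e u v] in deg_u.
set children := [set v in N | separates u r v].
have parent_le1 : #|N :\: children| <= 1.
  apply/card_le1_eqP => a b; rewrite !inE => /and3P [+ qa ua] /and3P [+ qb ub].
  rewrite qa ua qb ub /= !negbK => ra rb.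
  exact: neighbour_connectD_unique rb ra.
have : 1 < #|children|.
  have := cardsID children N; have := subset_leq_card (subsetIr N children).
  rewrite /degTQ -/N in deg_u; lia.
case/card_gt1P => a [b [+ + ab]]; rewrite !inE.
case/andP=> /andP [/existsP [q1 /andP [q1Q a_q1]] ua] u_ra.
case/andP=> /andP [/existsP [q2 /andP [q2Q b_q2]] ub] u_rb.
have [q1u u_r1 a1] := in_subtree_child ru ua u_ra a_q1.
have [q2u u_r2 b2] := in_subtree_child ru ub u_rb b_q2.
exists (q1, q2); rewrite /branch_witness /= q1Q q2Q q1u q2u u_r1 u_r2 /=.
apply: contra (neighbours_separated ua ub ab) => c12.
by apply: connect_trans a1 _; apply: connect_trans c12 _; rewrite connect_relS_sym.
Qed.

Lemma card_AQD1 r Q : #|AQ e r Q :\ r| <= #|Q| ^ 2.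
Proof.
pose f u := odflt (r, r) [pick p | branch_witness r Q u p].
have fP u : u \in AQ e r Q :\ r -> branch_witness r Q u (f u).
  rewrite in_setD1 => /andP [ur uA]; rewrite /f; case: pickP => [//|none].
  by have [p] := AQ_branch_witness uA ur; rewrite none.
have f_inj : {in AQ e r Q :\ r &, injective f}.
  move=> u u' Au Au' fuu'; have := fP u Au; have := fP u' Au'; rewrite -fuu'.
  case/and5P => _ _ _ _ /and3P [u'_r1 u'_r2 u'_12].
  case/and5P => _ _ q1u q2u /and3P [u_r1 u_r2 u_12].
  have ru : r != u by move: Au; rewrite in_setD1 eq_sym => /andP [].
  by rewrite (separator_unique ru q1u q2u u_r1 u_r2 u_12 u'_r1 u'_r2 u'_12).
rewrite -(card_in_imset f_inj) expnS -cardsX; apply/subset_leq_card/subsetP.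
move=> _ /imsetP [u Au ->]; have := fP u Au.
by case/and3P => q1Q q2Q _; rewrite inE q1Q q2Q.
Qed.

Lemma card_Qprime r Q : #|Qprime e r Q| <= #|Q|.+1 ^ 2.
Proof.
have := card_AQD1 r Q; have := cardsD1 r (AQ e r Q).
rewrite /Qprime cardsU !expnS; case: (r \in AQ e r Q) => /=; nia.
Qed.

End Tree.

Lemma Forall2_memr (A : eqType) B (R : A -> B -> Prop) (s1 : seq A) s2 y :
  List.Forall2 R s1 s2 -> List.In y s2 -> exists2 x, x \in s1 & R x y.
Proof.
elim=> [|x y' s1' s2' Rxy _ IH] //= [<-|/IH [z zs Rz]].
  by exists x => //; rewrite mem_head.
by exists z; rewrite // inE zs orbT.
Qed.

Lemma dheight_DNodeP (V : Type) (c : V) ts : dheight (DNode c ts) = 0 \/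
  exists2 t, List.In t ts & dheight (DNode c ts) = (dheight t).+1.
Proof.
elim: ts => [|t ts IH]; [by left | right].
rewrite [dheight _]/= -/(dheight (DNode c ts)).
have [_|h_gt] := leqP (dheight (DNode c ts)) (dheight t).+1; first by exists t; [left|].
case: IH h_gt => [-> //| [t' t'ts ->] _].
by exists t'; [right|].
Qed.

Lemma centroid_child_comp (V : finType) (e : rel V) Z W c C :
  is_centroid e Z W c -> C \in child_comps e Z W c ->
  0 < #|W :&: C| /\ 2 * #|W :&: C| <= #|W|.
Proof.
case/and3P=> _ _ /forallP c_half /imsetP [x /setIP [xZ xW] ->].
split; last by rewrite setIC; apply: (implyP (c_half x)).
by apply/card_gt0P; exists x; rewrite in_setI xW in_set xZ connect0.
Qed.

Lemma cdt_height (V : finType) (e : rel V) Z W t :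
  cdt e Z W t -> 2 ^ dheight t <= #|W|.
Proof.
have [n] := ubnP #|W|; elim: n Z W t => // n IH Z W t W_lt t_cdt.
case: t_cdt W_lt => {t} {}Z {}W c ts c_centroid ts_cdt W_lt.
have W_gt0 : 0 < #|W| by apply/card_gt0P; exists c; case/and3P: c_centroid.
have [->|[t t_ts ->]] := dheight_DNodeP c ts; first by [].
have [C + t_cdt] := Forall2_memr ts_cdt t_ts; rewrite mem_enum => C_child.
have [C_gt0 C_half] := centroid_child_comp c_centroid C_child.
have := IH _ _ _ _ t_cdt; rewrite expnS; lia.
Qed.

Theorem mainTheorem9 :
  exists k : nat,
    forall (V : finType) (e : rel V) (r : V) (Q : {set V}) (t : dtree V),
      is_tree e -> Q != set0 ->
      cdt e [set: V] (Qprime e r Q) t ->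
      dheight t <= k * trunc_log 2 #|Q| + k.
Proof.
exists 2 => V e r Q t [e_sym [e_irr [e_connected e_acyclic]]] _ t_cdt.
set L := trunc_log 2 #|Q|.
have Q_lt : #|Q| < 2 ^ L.+1 := trunc_log_ltn #|Q| (ltnSn 1).
have : 2 ^ dheight t <= 2 ^ (L.+1 * 2).
  apply: leq_trans (cdt_height t_cdt) _.
  apply: leq_trans (card_Qprime e_sym e_irr e_connected e_acyclic r Q) _.
  by rewrite expnM leq_exp2r.
rewrite leq_exp2l //; lia.
Qed.
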